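(* Let $\langle A, \leq, \otimes, \ominus, \mathbf{1}\rangle$ be a residuated partially ordered monoid with bottom element $\bot$, let $k\geq 1$ and $a = a_1\ldots a_k$, $b = b_1\ldots b_k \in Lex_k(A)$. If $\delta(a,b) = \gamma(a,b) = k+1$, then the residuation $a \ominus_k b$ of $a$ by $b$ in $\langle Lex_k(A), \leq_k, \otimes^k, \mathbf{1}^k\rangle$ exists and equals $(a_1 \ominus b_1) \ldots (a_k \ominus b_k)$; that is, this tuple lies in $Lex_k(A)$ and for every $c \in Lex_k(A)$, $b \otimes^k c \leq_k a$ iff $c \leq_k (a_1 \ominus b_1) \ldots (a_k \ominus b_k)$.
   Context: A residuated partially ordered monoid $\langle A, \leq, \otimes, \ominus, \mathbf{1}\rangle$ consists of a partial order $\langle A,\leq\rangle$, a commutative monoid $\langle A,\otimes,\mathbf{1}\rangle$, and a binary operation $\ominus$ with $b \otimes c \leq a$ iff $c \leq a \ominus b$ for all $a,b,c\in A$. $a<b$ means $a\leq b$, $a\neq b$. $I(A) = \{c \in A \mid \forall a,b \in A.\ a \otimes c = b \otimes c \Rightarrow a = b\}$, $C(A)=A\setminus I(A)$. $Lex_k(A)\subseteq A^k$: $Lex_1(A) = A$, $Lex_{k+1}(A) = I(A)\, Lex_k(A) \cup C(A)\{\bot\}^k$ (concatenations of sequences; $\{\bot\}^k$ the singleton of $k$ copies of $\bot$). The order $\leq_k$: $\leq_1=\leq$, and for $k\geq2$, $a_1 \ldots a_k \leq_k b_1 \ldots b_k$ iff $a_1 < b_1$, or $a_1 = b_1$ and $a_2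 \ldots a_k \leq_{k-1} b_2 \ldots b_k$. $\otimes^k$ is componentwise, $\mathbf{1}^k=\mathbf{1}\ldots\mathbf{1}$. For $a,b\in Lex_k(A)$: $\gamma(a,b) = \min\{ i \mid a_i \ominus b_i \in C(A)\}$ and $\delta(a,b) = \min\{ i \mid (a_i \ominus b_i) \otimes b_i < a_i\}$, each equal to $k+1$ if the set is empty. *)

From mathcomp Require Import all_boot.
From mathcomp Require Import boolp.
Set Implicit Arguments. Unset Strict Implicit. Unset Printing Implicit Defensive.

Record rpom := RPOM {
  car :> Type;
  le : car -> car -> Prop;
  mul : car -> car -> car;
  res : car -> car -> car;
  one : car;
  bot : car;
  le_refl : forall x, le x x;
  le_antisym : forall x y, le x y -> le y x -> x = y;
  le_trans : forall x y z, le x y -> le y z -> le x z;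
  mulA : forall x y z, mul x (mul y z) = mul (mul x y) z;
  mulC : forall x y, mul x y = mul y x;
  mul1 : forall x, mul one x = x;
  residuation : forall a b c, le (mul b c) a <-> le c (res a b);
  bot_le : forall x, le bot x
}.

Section Lex.
Variable A : rpom.

Definition lt (x y : A) : Prop := le x y /\ x <> y.

Definition Icanc (c : A) : Prop := forall a b : A, mul a c = mul b c -> a = b.
Definition Cnon (c : A) : Prop := ~ Icanc c.

(* Lex k A as a predicate on sequences; Lex_0 is not used (empty). *)
Fixpoint Lex (k : nat) (s : seq A) : Prop :=
  match k with
  | 0 => False
  | S k' =>
    match k' with
    | 0 => exists x, s = [:: x]
    | _ => exists c t, s = c :: t /\
            ((Icanc c /\ Lex k' t) \/ (Cnon c /\ t = nseq k' (bot A)))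
    end
  end.

Fixpoint lexle (k : nat) (a b : seq A) : Prop :=
  match k with
  | 0 => False
  | S k' =>
    match a, b with
    | x :: a', y :: b' =>
      match k' with
      | 0 => le x y
      | _ => lt x y \/ (x = y /\ lexle k' a' b')
      end
    | _, _ => False
    end
  end.

Definition mulk (a b : seq A) : seq A := [seq mul p.1 p.2 | p <- zip a b].
Definition resk (a b : seq A) : seq A := [seq res p.1 p.2 | p <- zip a b].

(* gamma(a,b) = min { i | a_i ⊖ b_i ∈ C(A) } (1-based), k+1 if none *)
Definition gamma (a b : seq A) : nat :=
  (find (fun p : A * A => `[< Cnon (res p.1 p.2) >]) (zip a b)).+1.

(* delta(a,b) = min { i | (a_i ⊖ b_i) ⊗ b_i < a_i } (1-based), k+1 if none *)
Definition delta (a b : seq A) : nat :=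
  (find (fun p : A * A => `[< lt (mul (res p.1 p.2) p.2) p.1 >]) (zip a b)).+1.

End Lex.

From Pilot Require Import Defs.
From mathcomp Require Import all_boot.
From mathcomp Require Import boolp.

Set Implicit Arguments.
Unset Strict Implicit.
Unset Printing Implicit Defensive.

(* Under gamma = delta = k+1 every residual r_i = a_i ⊖ b_i is cancellative
   with r_i ⊗ b_i = a_i.  Where b_i is cancellative so is a_i, and
   b_i ⊗ z = a_i iff z = r_i, so residuation transfers both the strict and the
   equality case of the lexicographic comparison and the induction descends to
   the tails.  Where b_i is not cancellative neither is a_i, so both tails are
   constantly bottom, the tail comparisons hold trivially, and only
   residuation at that coordinate matters. *)

Section LexResiduation.
Variable A : rpom.

Notation bot := (Defs.bot A).
Notation top := (Defs.res bot bot).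

Definition exact_residual (x y : A) : Prop :=
  Icanc (Defs.res x y) /\ Defs.mul (Defs.res x y) y = x.

Definition exact_residuals (a b : seq A) : bool :=
  all (fun p : A * A => `[< exact_residual p.1 p.2 >]) (zip a b).

Lemma mul_botl (z : A) : Defs.mul bot z = bot.
Proof.
apply: le_antisym; last exact: bot_le.
by rewrite mulC; apply/residuation; exact: bot_le.
Qed.

Lemma le_res_bot (z : A) : Defs.le z top.
Proof. by apply/residuation; rewrite mul_botl; exact: le_refl. Qed.

Lemma le_mul_res (x y : A) : Defs.le (Defs.mul (Defs.res x y) y) x.
Proof. by rewrite mulC; apply/residuation; exact: le_refl. Qed.

Lemma le_eqVlt (x y : A) : Defs.le x y <-> x = y \/ Defs.lt x y.
Proof.
split=> [xy|[->|[]//]]; last exact: le_refl.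
by case: (pselect (x = y)) => [|nxy]; [left|right].
Qed.

Lemma Icanc_mul (x y : A) : Icanc x -> Icanc y -> Icanc (Defs.mul x y).
Proof. by move=> cx cy p q E; apply: cx; apply: cy; rewrite -!mulA. Qed.

Lemma Icanc_mulr (x y : A) : Icanc (Defs.mul x y) -> Icanc y.
Proof. by move=> cxy p q E; apply: cxy; rewrite (mulC x) !mulA E. Qed.

Lemma exact_residualP (x y : A) :
  ~ Cnon (Defs.res x y) -> ~ Defs.lt (Defs.mul (Defs.res x y) y) x ->
  exact_residual x y.
Proof.
move=> /contrapT cr nlt; split=> //.
apply: le_antisym; first exact: le_mul_res.
apply: contrapT => nle; apply: nlt; split; first exact: le_mul_res.
by move=> E; apply: nle; rewrite E; exact: le_refl.
Qed.

Lemma exact_residuals_gamma_delta (a b : seq A) :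
  size a = size b -> gamma a b = (size a).+1 -> delta a b = (size a).+1 ->
  exact_residuals a b.
Proof.
move=> sab [g] [d].
have szip : size (zip a b) = size a by rewrite size_zip sab minnn.
set noncanc := fun p : A * A => `[< Cnon (Defs.res p.1 p.2) >] in g.
set inexact := fun p : A * A => `[< Defs.lt (Defs.mul (Defs.res p.1 p.2) p.2) p.1 >] in d.
have: all (predI (predC noncanc) (predC inexact)) (zip a b).
  by rewrite all_predI !all_predC !has_find g d szip ltnn.
apply: sub_all => p /andP[/asboolPn ncanc /asboolPn nlt].
by apply/asboolP; exact: exact_residualP.
Qed.

Lemma mul_eq_exact (x y z : A) :
  Icanc y -> Defs.mul (Defs.res x y) y = x ->
  Defs.mul y z = x <-> z = Defs.res x y.
Proof.
move=> cy ex; split=> [yz|->]; last by rewrite mulC.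
by apply: cy; rewrite mulC yz ex.
Qed.

Lemma lt_mul_exact (x y z : A) :
  Icanc y -> Defs.mul (Defs.res x y) y = x ->
  Defs.lt (Defs.mul y z) x <-> Defs.lt z (Defs.res x y).
Proof.
move=> cy ex; have yz_eq := mul_eq_exact z cy ex.
split=> -[le_yzx ne]; split.
- exact/residuation.
- by move/yz_eq.
- exact/residuation.
- by move/yz_eq.
Qed.

Lemma Lex_size k (s : seq A) : Lex k.+1 s -> size s = k.+1.
Proof.
elim: k s => [|k IH] s /=; first by case=> x ->.
case=> c [t [-> [[_ Lt]|[_ ->]]]] /=; first by rewrite IH.
by rewrite size_nseq.
Qed.

Lemma Lex_resk n (a b : seq A) :
  size a = n.+1 -> size b = n.+1 -> exact_residuals a b -> Lex n.+1 (resk a b).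
Proof.
elim: n a b => [|n IH] [|x a] [|y b] //=.
  by case: a => // _; case: b => // _ _; exists (Defs.res x y).
move=> [sa] [sb] /andP[/asboolP[cr _] eab].
by exists (Defs.res x y), (resk a b); split=> //; left; split=> //; apply: IH.
Qed.

Lemma lexle_pointwise n (s t : seq A) :
  size s = n.+1 -> size t = n.+1 ->
  (forall i, i < n.+1 -> Defs.le (nth bot s i) (nth bot t i)) -> lexle n.+1 s t.
Proof.
elim: n s t => [|n IH] [|x s] [|y t] //= [ss] [st] le_st.
  by rewrite (size0nil ss) (size0nil st) in le_st; exact: (le_st 0 isT).
have le_xy : Defs.le x y by exact: (le_st 0 isT).
case: (pselect (x = y)) => [exy|nxy]; last by left.
by right; split=> //; apply: IH => // i lti; exact: (le_st i.+1 lti).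
Qed.

Lemma lexle_cons n (x y : A) (s t : seq A) :
  lexle n.+1 s t -> lexle n.+2 (x :: s) (y :: t) <-> Defs.le x y.
Proof.
move=> le_st; change (Defs.lt x y \/ x = y /\ lexle n.+1 s t <-> Defs.le x y).
split=> [[[le_xy _]|[-> _]]|/le_eqVlt[->|lt_xy]]; by [|exact: le_refl|right|left].
Qed.

Lemma lexle_nseq_botl n (t : seq A) : size t = n.+1 -> lexle n.+1 (nseq n.+1 bot) t.
Proof.
move=> st; apply: lexle_pointwise => // [|i _]; first by rewrite size_nseq.
by rewrite nth_nseq if_same; exact: bot_le.
Qed.

Lemma lexle_nseq_topr n (s : seq A) : size s = n.+1 -> lexle n.+1 s (nseq n.+1 top).
Proof.
move=> ss; apply: lexle_pointwise => // [|i lti]; first by rewrite size_nseq.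
by rewrite nth_nseq lti; exact: le_res_bot.
Qed.

Lemma mulk_nseq_botl n (c : seq A) : size c = n -> mulk (nseq n bot) c = nseq n bot.
Proof.
elim: n c => [|n IH] [|z c] //= [sc].
by rewrite /mulk /= mul_botl; congr (_ :: _); exact: IH.
Qed.

Lemma resk_nseq_bot n : resk (nseq n bot) (nseq n bot) = nseq n top.
Proof. by elim: n => //= n IH; rewrite /resk /=; congr (_ :: _). Qed.

Lemma lexle_mulk_resk k (a b c : seq A) :
  Lex k.+1 a -> Lex k.+1 b -> Lex k.+1 c -> exact_residuals a b ->
  lexle k.+1 (mulk b c) a <-> lexle k.+1 c (resk a b).
Proof.
elim: k a b c => [|k IH] a b c.
  by move=> [x ->] [y ->] [z ->] _; exact: residuation.
move=> La Lb Lc; have := Lex_size Lc; move: La Lb Lc.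
move=> /= [x [a' [-> La]]] [y [b' [-> Lb]]] [z [c' [-> Lc]]] [sc].
move=> /andP[/asboolP /= [cr ex] eab].
change (lexle k.+2 (Defs.mul y z :: mulk b' c') (x :: a') <->
        lexle k.+2 (z :: c') (Defs.res x y :: resk a' b')).
case: (pselect (Icanc y)) => [cy|ncy].
  have cx : Icanc x by rewrite -ex; exact: Icanc_mul.
  have La' : Lex k.+1 a' by case: La => -[].
  have Lb' : Lex k.+1 b' by case: Lb => -[].
  have Lc' : z = Defs.res x y -> Lex k.+1 c'.
    by move=> ezr; case: Lc => -[// nc _]; rewrite ezr in nc.
  have lt_iff := lt_mul_exact z cy ex; have eq_iff := mul_eq_exact z cy ex.
  split=> [[/lt_iff lt_zr|[/eq_iff ezr le_tail]]|[/lt_iff lt_yzx|[ezr le_tail]]].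
  - by left.
  - by right; split=> //; apply/(IH a' b' c') => //; exact: Lc'.
  - by left.
  - by right; split; [exact/eq_iff | apply/(IH a' b' c') => //; exact: Lc'].
have ncx : Cnon x.
  by move=> cx; apply: ncy; apply: (@Icanc_mulr (Defs.res x y)); rewrite ex.
have -> : a' = nseq k.+1 bot by case: La => -[].
have -> : b' = nseq k.+1 bot by case: Lb => -[].
rewrite mulk_nseq_botl // resk_nseq_bot.
have lhs_iff := lexle_cons (Defs.mul y z) x (lexle_nseq_botl (size_nseq k.+1 bot)).
have rhs_iff := lexle_cons z (Defs.res x y) (lexle_nseq_topr sc).
by split=> [/lhs_iff/residuation/rhs_iff|/rhs_iff/residuation/lhs_iff].
Qed.

End LexResiduation.

Theorem proposition2 (A : rpom) (k : nat) (a b : seq A) :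
  1 <= k -> Lex k a -> Lex k b ->
  delta a b = k.+1 -> gamma a b = k.+1 ->
  Lex k (resk a b) /\
  (forall c : seq A, Lex k c -> (lexle k (mulk b c) a <-> lexle k c (resk a b))).
Proof.
case: k => // k _ La Lb dk gk.
have sa := Lex_size La; have sb := Lex_size Lb.
have eab : exact_residuals a b.
  by apply: exact_residuals_gamma_delta; rewrite ?sa ?sb.
split; first exact: Lex_resk.
by move=> c Lc; exact: lexle_mulk_resk.
Qed.
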